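(* Let $\mathcal U,\mathcal V,\mathcal X$ be real finite-dimensional Euclidean spaces, $f:\mathcal U\to(-\infty,+\infty]$ closed proper convex, $g(v)=\frac12\langle v,\Sigma_g v\rangle-\langle b,v\rangle$ with $\Sigma_g\succeq0$ self-adjoint and $b\in\mathcal V$, $\mathcal F:\mathcal X\to\mathcal U$, $\mathcal G:\mathcal X\to\mathcal V$ linear, $c\in\mathcal X$, $\sigma>0$, $\tau>0$, and $\mathcal L_\sigma(u,v;x)=f(u)+g(v)+\langle x,\mathcal F^*u+\mathcal G^*v-c\rangle+\frac\sigma2\|\mathcal F^*u+\mathcal G^*v-c\|^2$. Let $\mathcal E_g\succ0$ be self-adjoint with $\mathcal E_g\succeq\sigma^{-1}\Sigma_g+\mathcal G\mathcal G^*$, $\mathcal T_g:=\mathcal E_g-\sigma^{-1}\Sigma_g-\mathcal G\mathcal G^*$, $\mathcal T_f\succeq0$ self-adjoint on $\mathcal U$, $\widehat{\mathcal T}_f:=\mathcal T_f+\mathcal F\mathcal G^*\mathcal E_g^{-1}\mathcal G\mathcal F^*$. Let $\{(u^k,v^k,x^k)\}$ be generated by Algorithm SCB-SPALM: $(u^0,v^0,x^0)\in\mathrm{dom}f\times\mathcal V\times\mathcal X$ and $$(u^{k+1},v^{k+1})=\operatorname{argmin}_{u,v}\ \mathcal L_\sigma(u,v;x^k)+\tfrac\sigma2\|u-u^k\|^2_{\widehat{\mathcal T}_f}+\tfrac\sigma2\|v-v^k\|^2_{\mathcal T_g},\quad x^{k+1}=x^k+\tau\sigma(\mathcal F^*u^{k+1}+\mathcal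 G^*v^{k+1}-c).$$ Define $\delta_g(u,v,x):=\mathcal F\mathcal G^*\mathcal E_g^{-1}\big(b-\mathcal Gx-\Sigma_g v+\sigma\mathcal G(c-\mathcal F^*u-\mathcal G^*v)\big)$ and $\delta_g^k:=\delta_g(u^k,v^k,x^k)$. Then for every $k\ge0$, $u^{k+1},v^{k+1},x^{k+1}$ can be generated exactly by $$u^{k+1}=\operatorname{argmin}_u\ \mathcal L_\sigma(u,v^k;x^k)+\langle\delta_g^k,u\rangle+\tfrac\sigma2\|u-u^k\|^2_{\mathcal T_f},$$ $$v^{k+1}=\operatorname{argmin}_v\ \mathcal L_\sigma(u^{k+1},v;x^k)+\tfrac\sigma2\|v-v^k\|^2_{\mathcal T_g},$$ $$x^{k+1}=x^k+\tau\sigma(\mathcal F^*u^{k+1}+\mathcal G^*v^{k+1}-c).$$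
   Context: $\|w\|_{\mathcal T}^2:=\langle w,\mathcal T w\rangle$; $\succ0$/$\succeq0$ denote positive definite/semidefinite. *)

(* Euclidean spaces are modelled as R^n
   ('cV[R]_n) with the standard inner product; linear maps as matrices,
   adjoints as transposes. *)
From HB Require Import structures.
From mathcomp Require Import all_boot all_order all_algebra.
From mathcomp Require Import all_classical all_reals all_analysis.
Set Implicit Arguments. Unset Strict Implicit. Unset Printing Implicit Defensive.
Import Order.TTheory GRing.Theory Num.Theory numFieldNormedType.Exports.
Local Open Scope ring_scope.

Definition ip {R : realType} {n : nat} (a b : 'cV[R]_n) : R :=
  \sum_(i < n) a i 0 * b i 0.

Definition qnorm {R : realType} {n : nat} (T : 'M[R]_n) (w : 'cV[R]_n) : R :=
  ip w (T *m w).

Definition self_adjoint {R : realType} {n : nat} (T : 'M[R]_n) : Prop := T^T = T.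
Definition psd {R : realType} {n : nat} (T : 'M[R]_n) : Prop :=
  self_adjoint T /\ forall w : 'cV[R]_n, 0 <= qnorm T w.
Definition pd {R : realType} {n : nat} (T : 'M[R]_n) : Prop :=
  self_adjoint T /\ forall w : 'cV[R]_n, w != 0 -> 0 < qnorm T w.

Definition proper_fun {R : realType} {n : nat} (f : 'cV[R]_n -> \bar R) : Prop :=
  (forall u, f u != -oo%E) /\ exists u, f u != +oo%E.
Definition convex_fun {R : realType} {n : nat} (f : 'cV[R]_n -> \bar R) : Prop :=
  forall (u w : 'cV[R]_n) (t : R), 0 < t -> t < 1 ->
    (f (t *: u + (1 - t) *: w)%R <= t%:E * f u + (1 - t)%:E * f w)%E.
(* closed = lower semicontinuous *)
Definition closed_fun {R : realType} {n : nat} (f : 'cV[R]_n -> \bar R) : Prop :=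
  forall (u : 'cV[R]_n) (a : R), (a%:E < f u)%E ->
    \forall w \near u, (a%:E < f w)%E.

Definition gquad {R : realType} {nv : nat} (Sg : 'M[R]_nv) (b v : 'cV[R]_nv) : R :=
  2^-1 * ip v (Sg *m v) - ip b v.

Definition Lsig {R : realType} {nu nv nx : nat} (f : 'cV[R]_nu -> \bar R)
  (Sg : 'M[R]_nv) (b : 'cV[R]_nv) (F : 'M[R]_(nu, nx)) (G : 'M[R]_(nv, nx))
  (c : 'cV[R]_nx) (sigma : R) (u : 'cV[R]_nu) (v : 'cV[R]_nv) (x : 'cV[R]_nx)
  : \bar R :=
  let r := F^T *m u + G^T *m v - c in
  (f u + (gquad Sg b v + ip x r + sigma / 2 * ip r r)%:E)%E.

Definition delta_g {R : realType} {nu nv nx : nat}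
  (Sg : 'M[R]_nv) (b : 'cV[R]_nv) (F : 'M[R]_(nu, nx)) (G : 'M[R]_(nv, nx))
  (c : 'cV[R]_nx) (sigma : R) (Eg : 'M[R]_nv)
  (u : 'cV[R]_nu) (v : 'cV[R]_nv) (x : 'cV[R]_nx) : 'cV[R]_nu :=
  F *m G^T *m invmx Eg *m
    (b - G *m x - Sg *m v + sigma *: (G *m (c - F^T *m u - G^T *m v))).

(* Symmetric Gauss-Seidel decomposition.  Write the joint
   objective of SCB-SPALM as L_sigma(u, v; x^k) plus the proximal terms.  It is
   quadratic in v, and with T_g = E_g - Sigma_g / sigma - G G^* its Hessian in v
   is sigma E_g.  Completing the square in v at v^k gives

     joint(u, v) = L_sigma(u, v^k; x^k) + <delta_g^k, u>
                   + sigma/2 ||u - u^k||^2_{T_f} + C_k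
                   + sigma/2 ||v - vhat(u)||^2_{E_g},

   where C_k does not depend on (u, v): the square of the v-gradient, which is
   affine in u, produces exactly the linear term <delta_g^k, u> and the extra
   quadratic term sigma/2 ||u - u^k||^2_{F G^* E_g^-1 G F^*} of hat T_f.
   Hence minimizing the joint objective in (u, v) minimizes its u-marginal, which
   is the u-subproblem, while fixing u = u^{k+1} in the joint problem gives the
   v-subproblem. *)
From mathcomp Require Import all_boot all_order all_algebra.
From mathcomp Require Import all_classical all_reals all_analysis.
From mathcomp Require Import ring lra.
Import Order.TTheory GRing.Theory Num.Theory numFieldNormedType.Exports.
Local Open Scope ring_scope.

Set Implicit Arguments. Unset Strict Implicit.

Section InnerProduct.
Variable R : realType.
Implicit Types (m n : nat) (k : R).

Lemma ipE n (a b : 'cV[R]_n) : ip a b = (a^T *m b) 0 0.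
Proof. by rewrite /ip mxE; apply: eq_bigr => i _; rewrite mxE. Qed.

Lemma ipC n (a b : 'cV[R]_n) : ip a b = ip b a.
Proof. by rewrite /ip; apply: eq_bigr => i _; rewrite mulrC. Qed.

Lemma ipDl n (a b c : 'cV[R]_n) : ip (a + b) c = ip a c + ip b c.
Proof. by rewrite /ip -big_split; apply: eq_bigr => i _; rewrite mxE mulrDl. Qed.

Lemma ipZl n k (a b : 'cV[R]_n) : ip (k *: a) b = k * ip a b.
Proof. by rewrite /ip mulr_sumr; apply: eq_bigr => i _; rewrite mxE mulrA. Qed.

Lemma ipNl n (a b : 'cV[R]_n) : ip (- a) b = - ip a b.
Proof. by rewrite -scaleN1r ipZl mulN1r. Qed.

Lemma ipBl n (a b c : 'cV[R]_n) : ip (a - b) c = ip a c - ip b c.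
Proof. by rewrite ipDl ipNl. Qed.

Lemma ipDr n (a b c : 'cV[R]_n) : ip c (a + b) = ip c a + ip c b.
Proof. by rewrite ipC ipDl ![ip c _]ipC. Qed.

Lemma ipBr n (a b c : 'cV[R]_n) : ip c (a - b) = ip c a - ip c b.
Proof. by rewrite ipC ipBl ![ip c _]ipC. Qed.

Lemma ipZr n k (a b : 'cV[R]_n) : ip a (k *: b) = k * ip a b.
Proof. by rewrite ipC ipZl ipC. Qed.

Lemma ip0r n (a : 'cV[R]_n) : ip a 0 = 0.
Proof. by rewrite -(scale0r 0) ipZr mul0r. Qed.

Lemma ip_mulmxl m n (M : 'M[R]_(m, n)) a b : ip (M *m a) b = ip a (M^T *m b).
Proof. by rewrite !ipE trmx_mul mulmxA. Qed.

Lemma ip_mulmxr m n (M : 'M[R]_(m, n)) a b : ip a (M *m b) = ip (M^T *m a) b.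
Proof. by rewrite ip_mulmxl trmxK. Qed.

Lemma qnorm0 n (M : 'M[R]_n) : qnorm M 0 = 0.
Proof. by rewrite /qnorm mulmx0 ip0r. Qed.

Lemma qnormDM n (M N : 'M[R]_n) a : qnorm (M + N) a = qnorm M a + qnorm N a.
Proof. by rewrite /qnorm mulmxDl ipDr. Qed.

Lemma qnormBM n (M N : 'M[R]_n) a : qnorm (M - N) a = qnorm M a - qnorm N a.
Proof. by rewrite /qnorm mulmxBl ipBr. Qed.

Lemma qnormZM n k (M : 'M[R]_n) a : qnorm (k *: M) a = k * qnorm M a.
Proof. by rewrite /qnorm -scalemxAl ipZr. Qed.

Lemma qnormZ n (M : 'M[R]_n) k a : qnorm M (k *: a) = k ^+ 2 * qnorm M a.
Proof. by rewrite /qnorm -scalemxAr ipZl ipZr mulrA expr2. Qed.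

Lemma qnorm_mulmx m n (M : 'M[R]_m) (A : 'M[R]_(m, n)) a :
  qnorm M (A *m a) = qnorm (A^T *m M *m A) a.
Proof. by rewrite /qnorm ip_mulmxl !mulmxA. Qed.

Lemma qnormD n (M : 'M[R]_n) a d : M^T = M ->
  qnorm M (a + d) = qnorm M a + 2 * ip (M *m a) d + qnorm M d.
Proof.
move=> sM; rewrite /qnorm mulmxDr !ipDl !ipDr (ip_mulmxr M a d) sM.
by rewrite (ipC d (M *m a)); ring.
Qed.

Lemma qnorm_complete_square n (E : 'M[R]_n) k g d :
  E^T = E -> E \in unitmx -> k != 0 ->
  ip g d + k / 2 * qnorm E d =
  k / 2 * qnorm E (d + k^-1 *: (invmx E *m g)) - (2 * k)^-1 * ip g (invmx E *m g).
Proof.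
move=> sE uE k0; rewrite qnormD // ip_mulmxl sE.
rewrite /qnorm -scalemxAr mulKVmx // ipZr ipZl ipZr (ipC (invmx E *m g) g).
by rewrite (ipC d g); field.
Qed.

Lemma pd_unitmx n (E : 'M[R]_n) : pd E -> E \in unitmx.
Proof.
case=> sE pE; rewrite unitmxE unitfE; apply/negP => /det0P [w w0 wE].
have : 0 < qnorm E w^T by apply: pE; rewrite trmx_eq0.
by rewrite /qnorm -sE -trmx_mul wE trmx0 ip0r ltxx.
Qed.

Lemma pd_qnorm_ge0 n (E : 'M[R]_n) w : pd E -> 0 <= qnorm E w.
Proof.
case=> _ pE; have [->|w0] := eqVneq w 0; first by rewrite qnorm0.
exact/ltW/pE.
Qed.

End InnerProduct.

Section Marginal.
Variables (R : realType) (U V : Type).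
Variables (Phi : U -> V -> \bar R) (Psi : U -> \bar R) (C : R).
Variables (q : U -> V -> R) (vhat : U -> V).
Hypothesis PhiE : forall u v, Phi u v = (Psi u + (C + q u v)%:E)%E.
Hypothesis q_ge0 : forall u v, 0 <= q u v.
Hypothesis q_vhat : forall u, q u (vhat u) = 0.

Lemma argmin_marginal u1 v1 :
  (forall u v, (Phi u1 v1 <= Phi u v)%E) -> forall u, (Psi u1 <= Psi u)%E.
Proof.
move=> min1 u; rewrite -(@leeD2rE _ C%:E) //.
apply: le_trans (le_trans (min1 u (vhat u)) _); last by rewrite PhiE q_vhat addr0.
by rewrite PhiE leeD2l // lee_fin lerDl.
Qed.

End Marginal.

Section AugmentedLagrangian.
Variables (R : realType) (nu nv nx : nat).
Variables (Sg : 'M[R]_nv) (b : 'cV[R]_nv) (F : 'M[R]_(nu, nx)) (G : 'M[R]_(nv, nx)).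
Variables (c : 'cV[R]_nx) (sigma : R) (E : 'M[R]_nv).
Hypotheses (Sg_sym : Sg^T = Sg) (sigma_neq0 : sigma != 0).
Hypotheses (E_sym : E^T = E) (E_unit : E \in unitmx).

Let Tg := E - sigma^-1 *: Sg - G *m G^T.

Definition Lsmooth (u : 'cV[R]_nu) (v : 'cV[R]_nv) (x : 'cV[R]_nx) : R :=
  let r := F^T *m u + G^T *m v - c in
  gquad Sg b v + ip x r + sigma / 2 * ip r r.

Lemma LsigE f u v x : Lsig f Sg b F G c sigma u v x = (f u + (Lsmooth u v x)%:E)%E.
Proof. by []. Qed.

Definition grad_v (u : 'cV[R]_nu) (v : 'cV[R]_nv) (x : 'cV[R]_nx) : 'cV[R]_nv :=
  Sg *m v - b + G *m x + sigma *: (G *m (F^T *m u + G^T *m v - c)).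

(* Exact second-order expansion in v: the Hessian sigma^-1 Sg + G G^T is
   completed to E by the proximal term T_g. *)
Lemma Lsmooth_expand_v u v d x :
  Lsmooth u (v + d) x + sigma / 2 * qnorm Tg d
  = Lsmooth u v x + ip (grad_v u v x) d + sigma / 2 * qnorm E d.
Proof.
rewrite /Lsmooth /grad_v /gquad /Tg /=.
set r := F^T *m u + G^T *m v - c.
have -> : F^T *m u + G^T *m (v + d) - c = r + G^T *m d.
  by rewrite /r mulmxDr addrA [RHS]addrAC.
clearbody r.
rewrite -!/(qnorm Sg _) qnormD // !qnormBM qnormZM [qnorm (G *m _) _]/qnorm.
rewrite -mulmxA ip_mulmxr !ipDl !ipDr ipNl ipZl (ipC (G^T *m d) r).
rewrite (ip_mulmxr G^T x) (ip_mulmxl G r) trmxK.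
by field.
Qed.

Lemma grad_v_affine u u0 v x :
  grad_v u v x = grad_v u0 v x + sigma *: (G *m F^T *m (u - u0)).
Proof.
rewrite /grad_v -[RHS]addrA -scalerDr -mulmxA -mulmxDr.
congr (_ + sigma *: (G *m _)).
by rewrite mulmxBr [RHS]addrC !addrA subrK.
Qed.

Lemma delta_gE u v x :
  delta_g Sg b F G c sigma E u v x = - (F *m G^T *m invmx E *m grad_v u v x).
Proof.
rewrite /delta_g /grad_v -[RHS]mulmxN; congr (_ *m _).
rewrite !mulmxBr mulmxDr.
move: (G *m c) (G *m (F^T *m u)) (G *m (G^T *m v)) (G *m x) (Sg *m v) => p q r s t.
by apply/matrixP => i j; rewrite !mxE; ring.
Qed.

Lemma sGS_decomposition Tf u uk v vk x :
  let g0 := grad_v uk vk x in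
  let dk := delta_g Sg b F G c sigma E uk vk x in
  Lsmooth u v x + (sigma / 2 * qnorm (Tf + F *m G^T *m invmx E *m G *m F^T) (u - uk)
                   + sigma / 2 * qnorm Tg (v - vk))
  = Lsmooth u vk x + (ip dk u + sigma / 2 * qnorm Tf (u - uk))
    + (- ip dk uk - (2 * sigma)^-1 * ip g0 (invmx E *m g0)
       + sigma / 2 * qnorm E (v - vk + sigma^-1 *: (invmx E *m grad_v u vk x))).
Proof.
move=> g0 dk.
have Ei_sym : (invmx E)^T = invmx E by rewrite trmx_inv E_sym.
set H := F *m G^T *m invmx E *m G *m F^T.
set w := F *m G^T *m invmx E *m g0.
have expand_v := Lsmooth_expand_v u vk (v - vk) x.
rewrite [vk + _]addrC subrK in expand_v.
have square := qnorm_complete_square (grad_v u vk x) (v - vk) E_sym E_unit sigma_neq0.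
(* the square of the affine gradient produces the <delta_g, u> term and H *)
have grad_sq : ip (grad_v u vk x) (invmx E *m grad_v u vk x) =
    ip g0 (invmx E *m g0) + 2 * sigma * ip w (u - uk) + sigma ^+ 2 * qnorm H (u - uk).
  rewrite (grad_v_affine u uk) -/g0 -/(qnorm (invmx E) _) qnormD //.
  rewrite qnormZ qnorm_mulmx ipZr ip_mulmxr trmx_mul trmxK /H /w !mulmxA.
  by rewrite -/(qnorm (invmx E) g0); ring.
rewrite /dk delta_gE -/w qnormDM !ipNl ipBr in grad_sq *.
have -> : Lsmooth u v x = Lsmooth u vk x + ip (grad_v u vk x) (v - vk)
  + sigma / 2 * qnorm E (v - vk) - sigma / 2 * qnorm Tg (v - vk).
  by rewrite -expand_v; ring.
have -> : ip (grad_v u vk x) (v - vk) =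
    sigma / 2 * qnorm E (v - vk + sigma^-1 *: (invmx E *m grad_v u vk x))
    - (2 * sigma)^-1 * ip (grad_v u vk x) (invmx E *m grad_v u vk x)
    - sigma / 2 * qnorm E (v - vk).
  by rewrite -square; ring.
by rewrite grad_sq; field.
Qed.

End AugmentedLagrangian.

Unset Implicit Arguments.

Theorem proposition2p3 (R : realType) (nu nv nx : nat)
  (f : 'cV[R]_nu -> \bar R) (Sg : 'M[R]_nv) (b : 'cV[R]_nv)
  (F : 'M[R]_(nu, nx)) (G : 'M[R]_(nv, nx)) (c : 'cV[R]_nx)
  (sigma tau : R) (Eg : 'M[R]_nv) (Tf : 'M[R]_nu)
  (u : nat -> 'cV[R]_nu) (v : nat -> 'cV[R]_nv) (x : nat -> 'cV[R]_nx) :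
  closed_fun f -> proper_fun f -> convex_fun f ->
  psd Sg -> 0 < sigma -> 0 < tau ->
  pd Eg -> psd (Eg - sigma^-1 *: Sg - G *m G^T) ->
  psd Tf ->
  let Tg := Eg - sigma^-1 *: Sg - G *m G^T in
  let Tfh := Tf + F *m G^T *m invmx Eg *m G *m F^T in
  let L := Lsig f Sg b F G c sigma in
  (f (u 0%N) < +oo)%E ->
  (* Algorithm SCB-SPALM *)
  (forall k : nat, forall (u' : 'cV[R]_nu) (v' : 'cV[R]_nv),
     (L (u k.+1) (v k.+1) (x k)
        + (sigma / 2 * qnorm Tfh (u k.+1 - u k)
           + sigma / 2 * qnorm Tg (v k.+1 - v k))%:E
      <= L u' v' (x k)
        + (sigma / 2 * qnorm Tfh (u' - u k)
           + sigma / 2 * qnorm Tg (v' - v k))%:E)%E) ->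
  (forall k : nat,
     x k.+1 = x k + (tau * sigma) *: (F^T *m u k.+1 + G^T *m v k.+1 - c)) ->
  forall k : nat,
    let dk := delta_g Sg b F G c sigma Eg (u k) (v k) (x k) in
    (forall u' : 'cV[R]_nu,
       (L (u k.+1) (v k) (x k)
          + (ip dk (u k.+1) + sigma / 2 * qnorm Tf (u k.+1 - u k))%:E
        <= L u' (v k) (x k)
          + (ip dk u' + sigma / 2 * qnorm Tf (u' - u k))%:E)%E) /\
    (forall v' : 'cV[R]_nv,
       (L (u k.+1) (v k.+1) (x k) + (sigma / 2 * qnorm Tg (v k.+1 - v k))%:E
        <= L (u k.+1) v' (x k) + (sigma / 2 * qnorm Tg (v' - v k))%:E)%E) /\
    x k.+1 = x k + (tau * sigma) *: (F^T *m u k.+1 + G^T *m v k.+1 - c).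
Proof.
move=> _ _ _ [Sg_sym _] sigma_gt0 _ Eg_pd _ _ Tg Tfh L _ joint_min x_step k dk.
have sigma_neq0 : sigma != 0 by rewrite gt_eqF.
split; [|split; last exact: x_step].
- pose gk u' := grad_v Sg b F G c sigma u' (v k) (x k).
  apply: (argmin_marginal
    (Phi := fun u' v' => (L u' v' (x k) + (sigma / 2 * qnorm Tfh (u' - u k)
                                          + sigma / 2 * qnorm Tg (v' - v k))%:E)%E)
    (C := - ip dk (u k) - (2 * sigma)^-1 * ip (gk (u k)) (invmx Eg *m gk (u k)))
    (q := fun u' v' => sigma / 2 * qnorm Eg (v' - v k + sigma^-1 *: (invmx Eg *m gk u')))
    (vhat := fun u' => v k - sigma^-1 *: (invmx Eg *m gk u')) _ _ _ (joint_min k)).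
  + move=> u' v'; rewrite /L !LsigE -!addeA -!EFinD.
    rewrite (sGS_decomposition b F G c Sg_sym sigma_neq0 Eg_pd.1 (pd_unitmx Eg_pd)).
    by rewrite !addrA.
  + by move=> u' v'; apply: mulr_ge0; [lra | exact: pd_qnorm_ge0].
  + by move=> u'; rewrite [v k - _]addrC addrK addNr qnorm0 mulr0.
- move=> v'; have := joint_min k (u k.+1) v'.
  by rewrite !EFinD ![(_%:E + (_ * qnorm Tg _)%:E)%E]addeC !addeA leeD2rE.
Qed.
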